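(* Let $1\le p<\infty$ and let $T$ be a Dunford–Schwartz operator on $l_\infty$. Then for each $x\in l_p$ there exists $\widehat{x}\in l_p$ such that $$\Big\|\frac1n\sum_{k=0}^{n-1}T^k(x)-\widehat{x}\Big\|_\infty\to 0 \quad (n\to\infty).$$
   Context: $l_\infty$ is the space of bounded real sequences with $\|x\|_\infty=\sup_n|(x)_n|$; $l_p=\{x\in l_\infty:\|x\|_p=(\sum_n|(x)_n|^p)^{1/p}<\infty\}$. A linear operator $T:l_\infty\to l_\infty$ is a Dunford–Schwartz operator if $\|T(x)\|_1\le\|x\|_1$ for all $x\in l_1$ and $\|T(x)\|_\infty\le\|x\|_\infty$ for all $x\in l_\infty$. *)

From HB Require Import structures.
From mathcomp Require Import all_boot all_order all_algebra.
From mathcomp Require Import all_classical all_reals all_analysis.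
Set Implicit Arguments. Unset Strict Implicit. Unset Printing Implicit Defensive.
Import Order.TTheory GRing.Theory Num.Theory.
Import numFieldNormedType.Exports.
Local Open Scope classical_set_scope.
Local Open Scope ring_scope.

Section Defs.
Variable R : realType.

Definition bounded (x : nat -> R) : Prop := exists M : R, forall n, `|x n| <= M.

Definition linf_norm (x : nat -> R) : R := sup (range (fun n => `|x n|)).

Definition lp_sum (p : R) (x : nat -> R) : \bar R :=
  (\sum_(0 <= k <oo) ((`|x k| `^ p)%:E))%E.

Definition in_lp (p : R) (x : nat -> R) : Prop :=
  bounded x /\ (lp_sum p x < +oo)%E.

Definition lp_norm (p : R) (x : nat -> R) : \bar R :=
  ((lp_sum p x) `^ (p^-1))%E.

(* T : l_∞ -> l_∞ linear (values of T outside l_∞ are irrelevant) *)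
Definition linear_on_linf (T : (nat -> R) -> (nat -> R)) : Prop :=
  (forall x, bounded x -> bounded (T x)) /\
  (forall (a : R) x y, bounded x -> bounded y ->
     T (fun n => a * x n + y n) = (fun n => a * T x n + T y n)).

Definition dunford_schwartz (T : (nat -> R) -> (nat -> R)) : Prop :=
  linear_on_linf T /\
  (forall x, in_lp 1 x -> (lp_norm 1 (T x) <= lp_norm 1 x)%E) /\
  (forall x, bounded x -> linf_norm (T x) <= linf_norm x).

Definition cesaro_avg (T : (nat -> R) -> (nat -> R)) (x : nat -> R) (n : nat) : nat -> R :=
  fun i => (n%:R)^-1 * \sum_(k < n) (iter k T x) i.

End Defs.

From HB Require Import structures.
From mathcomp Require Import all_boot all_order all_algebra.
From mathcomp Require Import all_classical all_reals all_analysis.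
From mathcomp Require Import ring lra.
Import Order.TTheory GRing.Theory Num.Theory.
Import numFieldNormedType.Exports.
Set Implicit Arguments. Unset Strict Implicit. Unset Printing Implicit Defensive.
Local Open Scope classical_set_scope.
Local Open Scope ring_scope.

(* The matrix of [T] in the unit sequences has rows and columns of l1-norm at
   most 1, so by Jensen's inequality [T], and with it every Cesàro average, does
   not increase the partial sums of [|x_i|^p].
   For [y] in l2, pick [z] in the convex hull of the orbit of [y] whose l2 norm
   is almost minimal on the hull. The Cesàro averages of [z] stay in the hull
   with no larger norm, so by uniform convexity of l2 (the parallelogram
   identity) they are uniformly close to each other; they also differ from the
   averages of [y] by O(1/n). Hence the averages of [y] are uniformly Cauchy.
   A general [x] in l_p is uniformly approximated by its truncations, which lie
   in l2, and [T] is an l_oo contraction; the uniform limit of the averages is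
   in l_p by Fatou's lemma. *)

Section RealFacts.
Variable R : realType.
Implicit Types p l s t : R.

Lemma ler_psum_ord (s : nat -> R) n m : (forall k, 0 <= s k) -> (n <= m)%N ->
  \sum_(k < n) s k <= \sum_(k < m) s k.
Proof.
move=> s0 nm; rewrite -!(big_mkord xpredT).
exact: (nondecreasing_series (P := xpredT) (m := 0%N) (fun k _ _ => s0 k)).
Qed.

Lemma ler_term_psum_ord (s : nat -> R) i n : (forall k, 0 <= s k) -> (i < n)%N ->
  s i <= \sum_(k < n) s k.
Proof.
move=> s0 lt_in; apply: le_trans (ler_psum_ord s0 lt_in).
by rewrite big_ord_recr /= lerDr sumr_ge0.
Qed.

Lemma sum_ord_mkcond (f : nat -> R) M K : (M <= K)%N ->
  \sum_(k < K) (if (k < M)%N then f k else 0) = \sum_(k < M) f k.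
Proof. by move=> MK; rewrite (big_ord_widen K f MK) [RHS]big_mkcond. Qed.

Lemma powR2_normr t : `|t| `^ 2 = t ^+ 2.
Proof. by rewrite powR_mulrn // real_normK // num_real. Qed.

Lemma sum_shift_sub (f : nat -> R) B n k : (forall m, `|f m| <= B) ->
  `|\sum_(m < n) f (m + k)%N - \sum_(m < n) f m| <= 2 * k%:R * B.
Proof.
move=> fB.
have sum_le (g : nat -> R) : (forall m, `|g m| <= B) -> `|\sum_(m < k) g m| <= k%:R * B.
  move=> gB; apply: le_trans (ler_norm_sum _ _ _) _.
  rewrite mulr_natl -[X in B *+ X]card_ord -sumr_const.
  by apply: ler_sum => m _; exact: gB.
have split_k : \sum_(m < k + n) f m = \sum_(m < k) f m + \sum_(m < n) f (m + k)%N.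
  by rewrite big_split_ord /=; congr (_ + _); apply: eq_bigr => m _; rewrite addnC.
have split_n : \sum_(m < k + n) f m = \sum_(m < n) f m + \sum_(m < k) f (n + m)%N.
  by rewrite addnC big_split_ord.
have -> : \sum_(m < n) f (m + k)%N - \sum_(m < n) f m =
          \sum_(m < k) f (n + m)%N - \sum_(m < k) f m by lra.
apply: le_trans (ler_normB _ _) _.
have := sum_le (fun m => f (n + m)%N) (fun m => fB _); have := sum_le f fB.
lra.
Qed.

Lemma powR_convex p l s t : 1 <= p -> 0 <= l -> l <= 1 -> 0 <= s -> 0 <= t ->
  (l * s + (1 - l) * t) `^ p <= l * s `^ p + (1 - l) * t `^ p.
Proof.
move=> p1 l0 l1 s0 t0.
have := @convex_powR R p p1 (Itv01 l0 l1) s t.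
by rewrite !inE /= !in_itv /= !andbT !convRE => /(_ s0 t0).
Qed.

Lemma jensen_powR p M (b t : nat -> R) : 1 <= p ->
  (forall j, 0 <= b j) -> (forall j, 0 <= t j) -> \sum_(j < M) b j <= 1 ->
  (\sum_(j < M) b j * t j) `^ p <= \sum_(j < M) b j * t j `^ p.
Proof.
move=> p1; elim: M b => [|M IH] b b0 t0.
  by rewrite !big_ord0 powR0 // gt_eqF // (lt_le_trans ltr01 p1).
rewrite !big_ord_recr /=; set l := b M => hb.
have rest_ge0 : 0 <= \sum_(j < M) b j by exact: sumr_ge0.
have l1 : l <= 1 by apply: le_trans hb; rewrite lerDr.
have [l_eq1|l_neq1] := eqVneq l 1.
  have /psumr_eq0P rest0 : \sum_(j < M) b j = 0.
    by apply/eqP; rewrite eq_le rest_ge0 andbT -(lerD2r l) add0r {2}l_eq1.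
  by rewrite !big1 ?add0r ?l_eq1 ?mul1r // => j _; rewrite rest0 ?mul0r.
have m0 : 0 < 1 - l by rewrite subr_gt0 lt_neqAle l_neq1.
pose b' j := b j / (1 - l).
have scale f : \sum_(j < M) b j * f j = (1 - l) * \sum_(j < M) b' j * f j.
  rewrite mulr_sumr; apply: eq_bigr => j _.
  by rewrite /b' mulrA mulrCA divff ?gt_eqF ?mulr1.
have hb' : \sum_(j < M) b' j <= 1.
  by rewrite /b' -mulr_suml ler_pdivrMr // mul1r lerBrDr.
have b'0 j : 0 <= b' j by rewrite divr_ge0 // ltW.
have S0 : 0 <= \sum_(j < M) b' j * t j by apply: sumr_ge0 => j _; exact: mulr_ge0.
rewrite (scale t) (scale (fun j => t j `^ p)) ![_ + l * _]addrC.
apply: le_trans (powR_convex p1 (b0 M) l1 (t0 M) S0) _.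
by rewrite lerD2l ler_wpM2l ?(ltW m0) // IH.
Qed.

Lemma continuous_normr_powR p : 0 < p -> continuous (fun s : R => `|s| `^ p).
Proof.
move=> p0 s; have [->|s0] := eqVneq s 0.
  rewrite /continuous_at /= normr0 powR0 ?gt_eqF //.
  apply/cvgrPdist_lt => e e0.
  have -> : e = (e `^ p^-1) `^ p by rewrite -powRrM mulVf ?gt_eqF // powRr1 ?ltW.
  near=> t; rewrite sub0r normrN ger0_norm ?powR_ge0 //.
  apply: gt0_ltr_powR; rewrite ?nnegrE ?powR_ge0 //.
  by near: t; apply: (@nbhs0_lt _ R^o); exact: powR_gt0.
rewrite /continuous_at.
have -> : `|s| `^ p = expR (p * ln `|s|) by rewrite /powR normr_eq0 (negbTE s0).
apply: cvg_trans; first apply: (@near_eq_cvg _ _ _ _ (fun t => expR (p * ln `|t|))).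
  near=> t; rewrite /powR normr_eq0 ifN //.
  near: t; exact: (@cvgr_neq0 _ R^o _ _ _ id s cvg_id s0).
apply: (@continuous_comp _ _ _ (fun t => p * ln `|t|) expR s); last exact: continuous_expR.
apply: cvgM; first exact: cvg_cst.
apply: continuous_comp (@norm_continuous _ R^o s) _.
by apply: continuous_ln; rewrite normr_gt0.
Unshelve. all: by end_near.
Qed.

End RealFacts.

Section Sequences.
Variable R : realType.
Implicit Types (a B : R) (v w : nat -> R) (u : nat -> nat -> R).

Lemma linf_norm_ge v i : bounded v -> `|v i| <= linf_norm v.
Proof.
move=> [M hM]; apply: ub_le_sup; last by exists i.
by exists M => _ [j _ <-].
Qed.

Lemma linf_norm_le v B : (forall i, `|v i| <= B) -> linf_norm v <= B.
Proof.
move=> vB; apply: ge_sup; first by exists `|v 0%N|, 0%N.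
by move=> _ [j _ <-].
Qed.

Lemma bounded_lin a v w : bounded v -> bounded w -> bounded (fun n => a * v n + w n).
Proof.
move=> [M hM] [N hN]; exists (`|a| * M + N) => n.
by rewrite (le_trans (ler_normD _ _)) // normrM lerD // ler_wpM2l.
Qed.

Lemma bounded_sum K (c : nat -> R) (f : nat -> nat -> R) :
  (forall k, bounded (f k)) -> bounded (fun i => \sum_(k < K) c k * f k i).
Proof.
move=> hf; elim: K => [|K IH]; first by exists 0 => n; rewrite big_ord0 normr0.
under eq_fun do rewrite big_ord_recr /= addrC.
exact: bounded_lin.
Qed.

Definition unif_cauchy u := forall e, 0 < e -> exists N, forall n m i,
  (N <= n)%N -> (N <= m)%N -> `|u n i - u m i| <= e.

Definition unif_cvg u v := forall e, 0 < e -> exists N, forall n i,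
  (N <= n)%N -> `|u n i - v i| <= e.

Lemma unif_cauchy_approx u :
  (forall e, 0 < e -> exists u' N,
     (forall n m i, (N <= n)%N -> (N <= m)%N -> `|u' n i - u' m i| <= e) /\
     (forall n i, (N <= n)%N -> `|u n i - u' n i| <= e)) ->
  unif_cauchy u.
Proof.
move=> approx e e0; have e3 : 0 < e / 3 by rewrite divr_gt0.
have [u' [N [u'C uu']]] := approx _ e3.
exists N => n m i Nn Nm; have := u'C n m i Nn Nm; have := uu' n i Nn; have := uu' m i Nm.
have -> : u n i - u m i = (u n i - u' n i) + (u' n i - u' m i) - (u m i - u' m i) by ring.
move=> hm hn hnm; apply: le_trans (ler_normB _ _) _.
by apply: le_trans (lerD (ler_normD _ _) hm) _; lra.
Qed.

Lemma unif_cauchy_cvg u : unif_cauchy u -> exists v, unif_cvg u v.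
Proof.
move=> uC.
have cvg_i i : cvg ((fun n => u n i) @ \oo).
  apply: cauchy_cvg; apply: cauchy_exP => e e0.
  have e2 : 0 < e / 2 by rewrite divr_gt0.
  have [N hN] := uC _ e2.
  exists (u N i); exists N => // n Nn /=.
  rewrite -ball_normE /ball_ /=; apply: le_lt_trans (hN N n i (leqnn _) Nn) _.
  by rewrite ltr_pdivrMr // ltr_pMr // ltr1n.
exists (fun i => lim ((fun n => u n i) @ \oo)) => e e0.
have [N hN] := uC e e0; exists N => n i Nn.
have dist_cvg : (fun m => `|u n i - u m i|) @ \oo --> `|u n i - lim (u^~ i @ \oo)|.
  by apply: cvg_norm; apply: cvgB; [exact: cvg_cst | exact: cvg_i].
by apply: (ler_cvg_to dist_cvg (cvg_cst e)); exists N => // m Nm; exact: hN.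
Qed.

Lemma unif_cvg_pointwise u v : unif_cvg u v -> forall i, (fun n => u n i) @ \oo --> v i.
Proof.
move=> uv i; apply/cvgrPdist_le => e e0.
have [N hN] := uv e e0; exists N => // n Nn /=.
by rewrite distrC; exact: hN.
Qed.

Lemma unif_cvg_linf_norm u v : unif_cvg u v ->
  (fun n => linf_norm (fun i => u n i - v i)) @ \oo --> 0.
Proof.
move=> uv; apply/cvgrPdist_le => e e0.
have [N hN] := uv e e0; exists N => // n Nn /=.
have bdd : bounded (fun i => u n i - v i) by exists e => i; exact: hN.
rewrite sub0r normrN ger0_norm; first by apply: linf_norm_le => i; exact: hN.
exact: le_trans (normr_ge0 _) (linf_norm_ge 0%N bdd).
Qed.

End Sequences.

Section LpSums.
Variable R : realType.
Implicit Types (p l L : R) (v w : nat -> R).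

Definition lp_sum_le p w L := forall N, \sum_(i < N) `|w i| `^ p <= L.

Lemma lp_sum_leE p w L : (lp_sum p w <= L%:E)%E <-> lp_sum_le p w L.
Proof.
have terms_ge0 n : (0 <= (`|w n| `^ p)%:E)%E by rewrite lee_fin powR_ge0.
split=> [wL N | wL].
  rewrite -lee_fin; apply: le_trans wL.
  have := nneseries_lim_ge (P := xpredT) (m := 0%N) N (fun n _ _ => terms_ge0 n).
  by rewrite sumEFin big_mkord.
apply: lime_le; first exact: is_cvg_nneseries (fun n _ _ => terms_ge0 n).
by apply: nearW => N; rewrite sumEFin lee_fin big_mkord.
Qed.

Lemma lp_sum_ge0 p w : (0 <= lp_sum p w)%E.
Proof. by apply: nneseries_ge0 => n _ _; rewrite lee_fin powR_ge0. Qed.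

Lemma lp_sum_le_ge0 p w L : lp_sum_le p w L -> 0 <= L.
Proof. by move/(_ 0%N); rewrite big_ord0. Qed.

Lemma lp_sum_le_bounded p w L : 1 <= p -> lp_sum_le p w L -> bounded w.
Proof.
move=> p1 wL; exists (Num.max 1 L) => i; rewrite le_max.
have [//|wi_gt1 /=] := lerP `|w i| 1.
apply: le_trans (le1r_powR (ltW wi_gt1) p1) _.
apply: le_trans (wL i.+1).
exact: (ler_term_psum_ord (s := fun k => `|w k| `^ p) (fun k => powR_ge0 _ _) (ltnSn i)).
Qed.

Lemma in_lpP p w : 1 <= p -> in_lp p w <-> exists L, lp_sum_le p w L.
Proof.
move=> p1; split=> [[_ w_fin] | [L wL]].
  exists (fine (lp_sum p w)); apply/lp_sum_leE.
  by rewrite fineK // ge0_fin_numE // lp_sum_ge0.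
split; first exact: lp_sum_le_bounded wL.
by apply: le_lt_trans (ltry L); apply/lp_sum_leE.
Qed.

Lemma lp_sum_le_cvg0 p w L : 0 < p -> lp_sum_le p w L -> w @ \oo --> 0.
Proof.
move=> p0 wL.
have pw_cvg0 : (fun k => `|w k| `^ p) @ \oo --> 0.
  apply: cvg_series_cvg_0; apply: nondecreasing_is_cvgn.
    by apply: nondecreasing_series => n _ _; exact: powR_ge0.
  by exists L => _ [n _ <-]; rewrite /series /= big_mkord.
apply/cvgrPdist_lt => e e0.
have [N _ hN] := (cvgrPdist_lt _ _).1 pw_cvg0 (e `^ p) (powR_gt0 p e0).
exists N => // k /hN /=; rewrite !sub0r !normrN ger0_norm ?powR_ge0 //.
rewrite !ltNge; apply: contra => e_le_wk.
by apply: ge0_ler_powR; rewrite ?nnegrE // ltW.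
Qed.

Lemma lp_sum_le_lim p L (u : nat -> nat -> R) w : 0 < p ->
  (forall i, (fun n => u n i) @ \oo --> w i) ->
  (forall n, lp_sum_le p (u n) L) -> lp_sum_le p w L.
Proof.
move=> p0 uw uL N.
have sum_cvg : (fun n => \sum_(i < N) `|u n i| `^ p) @ \oo --> \sum_(i < N) `|w i| `^ p.
  elim: N {uL} => [|N IH].
    by rewrite big_ord0; under eq_cvg do rewrite big_ord0; exact: cvg_cst.
  rewrite big_ord_recr /=; under eq_cvg do rewrite big_ord_recr /=.
  apply: cvgD => //.
  by have := cvg_comp _ _ (uw N) (continuous_normr_powR p0 (x := w N)); exact.
by apply: (ler_cvg_to sum_cvg (cvg_cst L)); apply: nearW => n; exact: uL.
Qed.

Lemma lp_sum_le_conv p L l v w : 1 <= p -> 0 <= l -> l <= 1 ->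
  lp_sum_le p v L -> lp_sum_le p w L -> lp_sum_le p (fun i => l * v i + (1 - l) * w i) L.
Proof.
move=> p1 l0 l1 vL wL N.
have p0 : 0 <= p by rewrite (le_trans ler01).
have l'0 : 0 <= 1 - l by rewrite subr_ge0.
apply: (@le_trans _ _ (l * \sum_(i < N) `|v i| `^ p + (1 - l) * \sum_(i < N) `|w i| `^ p)).
  rewrite !mulr_sumr -big_split /=; apply: ler_sum => i _.
  apply: le_trans (powR_convex p1 l0 l1 (normr_ge0 (v i)) (normr_ge0 (w i))).
  apply: ge0_ler_powR; rewrite ?nnegrE ?addr_ge0 ?mulr_ge0 //.
  by apply: le_trans (ler_normD _ _) _; rewrite !normrM (ger0_norm l0) (ger0_norm l'0).
apply: le_trans (lerD (ler_wpM2l l0 (vL N)) (ler_wpM2l l'0 (wL N))) _.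
by rewrite -mulrDl subrKC mul1r.
Qed.

Definition truncate (M : nat) w : nat -> R := fun k => if (k < M)%N then w k else 0.

Definition unit_seq (j : nat) : nat -> R := fun k => (k == j)%:R.

Lemma truncateE M w : truncate M w = fun k => \sum_(j < M) w j * unit_seq j k.
Proof.
apply/funext => k; rewrite /truncate /unit_seq.
rewrite (eq_bigr (fun j : 'I_M => if nat_of_ord j == k then w j else 0)); last first.
  by move=> j _; rewrite eq_sym; case: eqP => _; rewrite ?mulr1 ?mulr0.
by rewrite -big_mkcond /= big_ord1_eq.
Qed.

Lemma bounded_unit_seq j : bounded (unit_seq j).
Proof. by exists 1 => k; rewrite /unit_seq normr_nat; case: (k == j); rewrite ?ler01. Qed.

Lemma lp_sum_le_unit_seq j : lp_sum_le 1 (unit_seq j) 1.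
Proof.
move=> N; under eq_bigr do rewrite powRr1 // /unit_seq normr_nat.
rewrite (eq_bigr (fun k : 'I_N => if nat_of_ord k == j then 1 else 0)) => [|k _].
  by rewrite -big_mkcond /= (big_ord1_eq _ (fun=> 1)); case: ifP.
by case: eqP.
Qed.

Lemma lp_sum_le_truncate p M w : 0 < p ->
  lp_sum_le p (truncate M w) (\sum_(k < M) `|w k| `^ p).
Proof.
move=> p0 N.
have pw_ge0 k : 0 <= `|truncate M w k| `^ p by exact: powR_ge0.
apply: le_trans (ler_psum_ord pw_ge0 (leq_maxl N M)) _.
rewrite -(sum_ord_mkcond (fun k => `|w k| `^ p) (leq_maxr N M)); apply: ler_sum => k _.
by rewrite /truncate; case: ifP => // _; rewrite normr0 powR0 ?gt_eqF.
Qed.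

End LpSums.

Arguments unit_seq {R}.

Section LinearOperator.
Variables (R : realType) (T : (nat -> R) -> (nat -> R)).
Hypothesis T_linear : linear_on_linf T.
Implicit Types (a : R) (v w : nat -> R).

Lemma T_bounded w : bounded w -> bounded (T w).
Proof. exact: T_linear.1. Qed.

Lemma T_lin a v w : bounded v -> bounded w ->
  T (fun n => a * v n + w n) = (fun n => a * T v n + T w n).
Proof. exact: T_linear.2. Qed.

Lemma T_zero : T (fun=> 0) = fun=> 0.
Proof.
have bdd0 : bounded (fun=> 0 : R) by exists 0 => n; rewrite normr0.
have := T_lin (-1) bdd0 bdd0; under eq_fun do rewrite mulr0 addr0.
by move=> ->; apply/funext => n; rewrite mulN1r addNr.
Qed.

Lemma T_sum K (c : nat -> R) (f : nat -> nat -> R) : (forall k, bounded (f k)) ->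
  T (fun i => \sum_(k < K) c k * f k i) = fun i => \sum_(k < K) c k * T (f k) i.
Proof.
move=> f_bdd; elim: K => [|K IH].
  under eq_fun do rewrite big_ord0.
  by rewrite T_zero; under [RHS]eq_fun do rewrite big_ord0.
under eq_fun do rewrite big_ord_recr /= addrC.
rewrite T_lin ?IH //; last exact: bounded_sum.
by apply/funext => n; rewrite big_ord_recr /= addrC.
Qed.

Lemma iter_bounded m w : bounded w -> bounded (iter m T w).
Proof. by move=> w_bdd; elim: m => [|m IH] //=; exact: T_bounded. Qed.

Lemma iter_sum m K (c : nat -> R) (f : nat -> nat -> R) : (forall k, bounded (f k)) ->
  iter m T (fun i => \sum_(k < K) c k * f k i) =
  fun i => \sum_(k < K) c k * iter m T (f k) i.
Proof.
move=> f_bdd; elim: m => [|m IH] //=.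
by rewrite IH (@T_sum K c (fun k => iter m T (f k))) // => k; exact: iter_bounded.
Qed.

Lemma iter_lin m a v w : bounded v -> bounded w ->
  iter m T (fun n => a * v n + w n) = fun n => a * iter m T v n + iter m T w n.
Proof.
move=> v_bdd w_bdd; elim: m => [|m IH] //=.
by rewrite IH T_lin //; exact: iter_bounded.
Qed.

Lemma cesaro_avgB v w n i : bounded v -> bounded w ->
  cesaro_avg T (fun k => v k - w k) n i = cesaro_avg T v n i - cesaro_avg T w n i.
Proof.
move=> v_bdd w_bdd; rewrite /cesaro_avg -mulrBr -sumrB; congr (_ * _).
have -> : (fun k => v k - w k) = fun k => -1 * w k + v k.
  by apply/funext => k; rewrite mulN1r addrC.
by apply: eq_bigr => m _; rewrite iter_lin // mulN1r addrC.
Qed.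

End LinearOperator.

Section CesaroAverages.
Variables (R : realType) (T : (nat -> R) -> (nat -> R)).
Implicit Types (l : R) (v w : nat -> R).

Lemma cesaro_avg0 w : cesaro_avg T w 0 = fun=> 0.
Proof. by apply/funext => i; rewrite /cesaro_avg big_ord0 mulr0. Qed.

Lemma cesaro_avg1 w : cesaro_avg T w 1 = w.
Proof. by apply/funext => i; rewrite /cesaro_avg big_ord1 invr1 mul1r. Qed.

Lemma cesaro_avgSS w n : cesaro_avg T w n.+2 =
  fun i => n.+1%:R / n.+2%:R * cesaro_avg T w n.+1 i +
           (1 - n.+1%:R / n.+2%:R) * iter n.+1 T w i.
Proof.
apply/funext => i; rewrite /cesaro_avg [in LHS]big_ord_recr /=.
have n1 : n.+1%:R != 0 :> R by rewrite pnatr_eq0.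
have n2 : n.+2%:R != 0 :> R by rewrite pnatr_eq0.
by field; apply/andP.
Qed.

(* Each average is a convex combination of the previous one and an iterate of
   [w], by [cesaro_avgSS]. *)
Lemma cesaro_avg_ind (P : (nat -> R) -> Prop) w :
  (forall v, P v -> P (T v)) ->
  (forall l v1 v2, 0 <= l -> l <= 1 -> P v1 -> P v2 ->
     P (fun i => l * v1 i + (1 - l) * v2 i)) ->
  P w -> forall n, P (cesaro_avg T w n.+1).
Proof.
move=> PT Pconv Pw; elim=> [|n IH]; first by rewrite cesaro_avg1.
rewrite cesaro_avgSS; apply: Pconv => //.
- by rewrite ler_pdivrMr ?ltr0Sn // mul1r ler_nat.
- by elim: n.+1 {IH} => [|m IHm] //=; exact: PT.
Qed.

End CesaroAverages.

Section DunfordSchwartz.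
Variables (R : realType) (T : (nat -> R) -> (nat -> R)).
Hypothesis hT : dunford_schwartz T.
Implicit Types (p L B : R) (v w : nat -> R).

Let T_linear : linear_on_linf T := hT.1.

Lemma T_linf_le v B : (forall i, `|v i| <= B) -> forall i, `|T v i| <= B.
Proof.
move=> vB i; have v_bdd : bounded v by exists B.
apply: le_trans (linf_norm_ge i (T_bounded T_linear v_bdd)) _.
by apply: le_trans (hT.2.2 v v_bdd) _; exact: linf_norm_le.
Qed.

Lemma iter_linf_le v B m : (forall i, `|v i| <= B) -> forall i, `|iter m T v i| <= B.
Proof. by move=> vB; elim: m => [|m IH] //=; exact: T_linf_le. Qed.

Lemma cesaro_avg_linf_le w B n : (forall i, `|w i| <= B) ->
  forall i, `|cesaro_avg T w n i| <= B.
Proof.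
move=> wB; case: n => [|n].
  by move=> i; rewrite cesaro_avg0 normr0 (le_trans _ (wB 0%N)).
apply: (cesaro_avg_ind (P := fun v => forall i, `|v i| <= B)) => //.
  by move=> v; exact: T_linf_le.
move=> l v1 v2 l0 l1 v1B v2B i; have l'0 : 0 <= 1 - l by rewrite subr_ge0.
apply: le_trans (ler_normD _ _) _; rewrite !normrM (ger0_norm l0) (ger0_norm l'0).
apply: le_trans (lerD (ler_wpM2l l0 (v1B i)) (ler_wpM2l l'0 (v2B i))) _.
by rewrite -mulrDl subrKC mul1r.
Qed.

Lemma lp_sum_le_T_l1 w L : lp_sum_le 1 w L -> lp_sum_le 1 (T w) L.
Proof.
move=> wL; have w_l1 : in_lp 1 w by apply/in_lpP => //; exists L.
have := hT.2.1 w w_l1; rewrite /lp_norm invr1 !poweRe1 ?lp_sum_ge0 // => Tw_le.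
by apply/lp_sum_leE; apply: le_trans Tw_le _; apply/lp_sum_leE.
Qed.

Lemma T_truncate M w :
  T (truncate M w) = fun i => \sum_(j < M) w j * T (unit_seq j) i.
Proof. by rewrite truncateE (T_sum T_linear) // => j; exact: (bounded_unit_seq R j). Qed.

(* Columns of the matrix of [T] are bounded in l1 by the l1 contraction, rows
   by the l_oo contraction tested on sign sequences. *)
Lemma T_unit_seq_col_sum j N : \sum_(i < N) `|T (unit_seq j) i| <= 1.
Proof.
have := lp_sum_le_T_l1 (lp_sum_le_unit_seq R j) N.
by under eq_bigr do rewrite powRr1 //.
Qed.

Lemma T_unit_seq_row_sum i M : \sum_(j < M) `|T (unit_seq j) i| <= 1.
Proof.
pose s j := Num.sg (T (unit_seq j) i).
have sB k : `|truncate M s k| <= 1.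
  rewrite /truncate; case: ifP => _; last by rewrite normr0.
  by rewrite normr_sg; case: (_ != 0).
have := T_linf_le sB i; rewrite T_truncate /s.
under eq_bigr do rewrite -normrEsg.
by rewrite ger0_norm // sumr_ge0.
Qed.

Lemma T_truncate_cvg w : bounded w -> w @ \oo --> 0 ->
  forall i, (fun M => T (truncate M w) i) @ \oo --> T w i.
Proof.
move=> w_bdd w0 i; apply/cvgrPdist_le => e e0.
have [M0 _ hM0] := (cvgrPdist_le _ _).1 w0 e e0.
exists M0 => // M /= M0M.
have tr_bdd : bounded (truncate M w).
  by rewrite truncateE; apply: bounded_sum => j; exact: (bounded_unit_seq R j).
have tail_le k : `|-1 * truncate M w k + w k| <= e.
  rewrite /truncate mulN1r; case: ltnP => [_|Mk]; first by rewrite addNr normr0 ltW.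
  by rewrite oppr0 add0r -normrN -sub0r; apply: hM0; exact: leq_trans Mk.
by have := T_linf_le tail_le i; rewrite (T_lin T_linear) // mulN1r addrC.
Qed.

Lemma lp_sum_le_T_truncate p M w : 1 <= p ->
  lp_sum_le p (T (truncate M w)) (\sum_(j < M) `|w j| `^ p).
Proof.
move=> p1 N; rewrite T_truncate.
apply: (@le_trans _ _ (\sum_(i < N) \sum_(j < M) `|T (unit_seq j) i| * `|w j| `^ p)).
  apply: ler_sum => i _.
  apply: le_trans (jensen_powR (b := fun j => `|T (unit_seq j) i|) (t := fun j => `|w j|)
    p1 (fun _ => normr_ge0 _) (fun _ => normr_ge0 _) (T_unit_seq_row_sum i M)).
  apply: ge0_ler_powR; rewrite ?nnegrE ?(le_trans ler01 p1) //.
    by apply: sumr_ge0 => j _; exact: mulr_ge0.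
  by apply: le_trans (ler_norm_sum _ _ _) _; apply: ler_sum => j _; rewrite normrM mulrC.
rewrite exchange_big /=; apply: ler_sum => j _.
by rewrite -mulr_suml ler_piMl ?powR_ge0 // T_unit_seq_col_sum.
Qed.

Lemma lp_sum_le_T p w L : 1 <= p -> lp_sum_le p w L -> lp_sum_le p (T w) L.
Proof.
move=> p1 wL; have p0 : 0 < p := lt_le_trans ltr01 p1.
have T_tr_cvg := T_truncate_cvg (lp_sum_le_bounded p1 wL) (lp_sum_le_cvg0 p0 wL).
apply: (lp_sum_le_lim p0 T_tr_cvg) => M N.
exact: le_trans (lp_sum_le_T_truncate M w p1 N) (wL M).
Qed.

Lemma lp_sum_le_cesaro_avg p w L n : 1 <= p -> lp_sum_le p w L ->
  lp_sum_le p (cesaro_avg T w n) L.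
Proof.
move=> p1 wL; case: n => [|n].
  move=> N; rewrite cesaro_avg0 big1 ?(lp_sum_le_ge0 wL) // => i _.
  by rewrite normr0 powR0 // gt_eqF // (lt_le_trans ltr01 p1).
apply: (cesaro_avg_ind (P := fun v => lp_sum_le p v L)) => // [v|l v1 v2 l0 l1].
  exact: lp_sum_le_T.
exact: lp_sum_le_conv.
Qed.

End DunfordSchwartz.

Section OrbitHull.
Variables (R : realType) (T : (nat -> R) -> (nat -> R)).
Hypothesis hT : dunford_schwartz T.
Variable y : nat -> R.
Hypothesis y_bdd : bounded y.
Implicit Types (l : R) (v w z : nat -> R).

Let T_linear : linear_on_linf T := hT.1.

Definition orbit_hull w := exists K (c : nat -> R), (forall k, 0 <= c k) /\
  \sum_(k < K) c k = 1 /\ w = fun i => \sum_(k < K) c k * iter k T y i.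

Lemma orbit_hull_refl : orbit_hull y.
Proof.
exists 1%N, (fun=> 1); split; first by move=> k; exact: ler01.
by split; [rewrite big_ord1 | apply/funext => i; rewrite big_ord1 mul1r].
Qed.

Lemma orbit_hull_T w : orbit_hull w -> orbit_hull (T w).
Proof.
move=> [K [c [c0 [c1 ->]]]].
rewrite (@T_sum _ _ T_linear K c (fun k => iter k T y)); last first.
  by move=> k; exact: (iter_bounded T_linear).
exists K.+1, (fun k => if k is k'.+1 then c k' else 0); split; first by case.
split; first by rewrite big_ord_recl /= add0r -c1.
by apply/funext => i; rewrite big_ord_recl /= mul0r add0r.
Qed.

Lemma orbit_hull_conv l v w : 0 <= l -> l <= 1 -> orbit_hull v -> orbit_hull w ->
  orbit_hull (fun i => l * v i + (1 - l) * w i).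
Proof.
move=> l0 l1 [K1 [c1 [c10 [c11 ->]]]] [K2 [c2 [c20 [c21 ->]]]].
have l'0 : 0 <= 1 - l by rewrite subr_ge0.
pose K := maxn K1 K2.
have K1K : (K1 <= K)%N := leq_maxl _ _; have K2K : (K2 <= K)%N := leq_maxr _ _.
pose pad (c : nat -> R) K' k := if (k < K')%N then c k else 0.
exists K, (fun k => l * pad c1 K1 k + (1 - l) * pad c2 K2 k); split.
  by move=> k; rewrite /pad addr_ge0 ?mulr_ge0 //; case: ifP.
split.
  by rewrite big_split /= -!mulr_sumr !sum_ord_mkcond // c11 c21 !mulr1 subrKC.
apply/funext => i.
rewrite -(sum_ord_mkcond (fun k => c1 k * iter k T y i) K1K).
rewrite -(sum_ord_mkcond (fun k => c2 k * iter k T y i) K2K).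
rewrite !mulr_sumr -big_split /=; apply: eq_bigr => k _.
by rewrite /pad; case: ifP => _; case: ifP => _; ring.
Qed.

Lemma orbit_hull_cesaro_avg w n : orbit_hull w -> orbit_hull (cesaro_avg T w n.+1).
Proof.
move=> wC; apply: (cesaro_avg_ind (P := orbit_hull)) => //.
  exact: orbit_hull_T.
by move=> l v1 v2; exact: orbit_hull_conv.
Qed.

(* Averaging a convex combination of [T^k y], [k < K], shifts the averages of
   [y] by at most [K] terms out of [n]. *)
Lemma orbit_hull_cesaro_avg_sub z : orbit_hull z ->
  exists C, forall n i, (0 < n)%N ->
    `|cesaro_avg T z n i - cesaro_avg T y n i| <= C / n%:R.
Proof.
move=> [K [c [c0 [c1 ->]]]]; have [B yB] := y_bdd.
exists (2 * K%:R * B) => n i n0.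
have avg_z : cesaro_avg T (fun j => \sum_(k < K) c k * iter k T y j) n i =
    n%:R^-1 * \sum_(k < K) c k * \sum_(m < n) iter (m + k) T y i.
  rewrite /cesaro_avg; congr (_ * _).
  under eq_bigr => m _ do rewrite (@iter_sum _ _ T_linear m K c (fun k => iter k T y)
    (fun k => iter_bounded T_linear k y_bdd)).
  rewrite exchange_big /=; apply: eq_bigr => k _.
  by rewrite mulr_sumr; apply: eq_bigr => m _; rewrite iterD.
have avg_y : cesaro_avg T y n i = n%:R^-1 * \sum_(k < K) c k * \sum_(m < n) iter m T y i.
  by rewrite /cesaro_avg -mulr_suml c1 mul1r.
rewrite avg_z avg_y -mulrBr -sumrB normrM ger0_norm ?invr_ge0 //.
rewrite mulrC ler_wpM2r ?invr_ge0 //.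
apply: le_trans (ler_norm_sum _ _ _) _.
apply: (@le_trans _ _ (\sum_(k < K) c k * (2 * K%:R * B))).
  2: by rewrite -mulr_suml c1 mul1r.
apply: ler_sum => k _; rewrite -mulrBr normrM ger0_norm // ler_wpM2l //.
have iter_yB m j : `|iter m T y j| <= B by exact: iter_linf_le.
apply: le_trans (sum_shift_sub n k (fun m => iter_yB m i)) _.
have B0 : 0 <= B := le_trans (normr_ge0 _) (yB 0%N).
by rewrite ler_wpM2r // ler_wpM2l // ler_nat ltnW.
Qed.

End OrbitHull.

Section MeanErgodicL2.
Variables (R : realType) (T : (nat -> R) -> (nat -> R)).
Hypothesis hT : dunford_schwartz T.
Variables (y : nat -> R) (Ly : R).
Hypothesis y_l2 : lp_sum_le 2 y Ly.

Let y_bdd : bounded y := lp_sum_le_bounded (ler1n R 2) y_l2.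

Let l2_hull := [set L | exists2 w, orbit_hull T y w & lp_sum_le 2 w L].

Let l2_hull_has_inf : has_inf l2_hull.
Proof.
split; first by exists Ly, y => //; exact: orbit_hull_refl.
by exists 0 => L [w _]; exact: lp_sum_le_ge0.
Qed.

Let D := inf l2_hull.

Lemma orbit_hull_l2_gt w eta : orbit_hull T y w -> 0 < eta ->
  exists N, D - eta < \sum_(i < N) `|w i| `^ 2.
Proof.
move=> wC eta0; have [//|no_N] := pselect (exists N, D - eta < \sum_(i < N) `|w i| `^ 2).
have : l2_hull (D - eta).
  by exists w => // N; rewrite leNgt; apply/negP => lt_N; apply: no_N; exists N.
by move/(ge_inf l2_hull_has_inf.2); rewrite -/D; lra.
Qed.

(* Uniform convexity of l2, via the parallelogram identity: the midpoint of
   [a] and [b] lies in the hull, so its squared norm is at least about [D]. *)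
Lemma orbit_hull_l2_close a b L : orbit_hull T y a -> orbit_hull T y b ->
  lp_sum_le 2 a L -> lp_sum_le 2 b L -> forall i, ((a i - b i) / 2) ^+ 2 <= L - D.
Proof.
move=> aC bC aL bL i; apply/ler_addgt0Pr => eta eta0.
pose mid k := 1 / 2 * a k + (1 - 1 / 2) * b k.
have midC : orbit_hull T y mid.
  by apply: orbit_hull_conv => //; rewrite ler_pdivrMr // mul1r ler1n.
have [N0 hN0] := orbit_hull_l2_gt midC eta0.
pose N := maxn N0 i.+1.
have mid_gt : D - eta < \sum_(k < N) `|mid k| `^ 2.
  apply: lt_le_trans hN0 _.
  exact: (ler_psum_ord (s := fun k => `|mid k| `^ 2) (fun _ => powR_ge0 _ _)
    (leq_maxl _ _)).
have parallelogram : \sum_(k < N) ((a k - b k) / 2) ^+ 2 =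
    1 / 2 * \sum_(k < N) `|a k| `^ 2 + 1 / 2 * \sum_(k < N) `|b k| `^ 2
    - \sum_(k < N) `|mid k| `^ 2.
  rewrite !mulr_sumr -big_split -sumrB /=; apply: eq_bigr => k _.
  by rewrite /mid !powR2_normr; field.
have := ler_term_psum_ord (s := fun k => ((a k - b k) / 2) ^+ 2) (fun k => sqr_ge0 _)
  (leq_trans (ltnSn i) (leq_maxr N0 i.+1)).
have := aL N; have := bL N; rewrite /= parallelogram; lra.
Qed.

Lemma cesaro_avg_unif_cauchy_l2 : unif_cauchy (cesaro_avg T y).
Proof.
apply: unif_cauchy_approx => e e0.
have eta0 : 0 < (e / 2) ^+ 2 by rewrite exprn_gt0 // divr_gt0.
have [L0 [z zC zL0] L0_lt] := inf_adherent eta0 l2_hull_has_inf.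
have [C hC] := orbit_hull_cesaro_avg_sub hT y_bdd zC.
pose N := (Num.Def.trunc (C / e)).+1.
have N0 : (0 < N)%N by [].
exists (cesaro_avg T z), N; split => [n m i Nn Nm | n i Nn].
  have avgC k : orbit_hull T y (cesaro_avg T z k.+1) by exact: orbit_hull_cesaro_avg.
  have avgL k : lp_sum_le 2 (cesaro_avg T z k) L0.
    by apply: lp_sum_le_cesaro_avg => //; rewrite ler1n.
  have := orbit_hull_l2_close (avgC n.-1) (avgC m.-1) (avgL _) (avgL _) i.
  rewrite !prednK ?(leq_trans N0) // => close.
  have : ((cesaro_avg T z n i - cesaro_avg T z m i) / 2) ^+ 2 <= (e / 2) ^+ 2.
    by rewrite -/D in L0_lt *; lra.
  by rewrite ler_norml => sq; apply/andP; split; nra.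
rewrite distrC; apply: le_trans (hC n i (leq_trans N0 Nn)) _.
have n0 : 0 < (n%:R : R) by rewrite ltr0n (leq_trans N0 Nn).
rewrite ler_pdivrMr // -ler_pdivrMl // mulrC.
by apply: le_trans (ltW (truncnS_gt _)) _; rewrite ler_nat.
Qed.

End MeanErgodicL2.

Lemma cesaro_avg_unif_cauchy (R : realType) (T : (nat -> R) -> (nat -> R)) p x L :
  dunford_schwartz T -> 1 <= p -> lp_sum_le p x L -> unif_cauchy (cesaro_avg T x).
Proof.
move=> hT p1 xL; have p0 : 0 < p := lt_le_trans ltr01 p1.
have x_bdd := lp_sum_le_bounded p1 xL.
apply: unif_cauchy_approx => e e0.
have [M _ hM] := (cvgrPdist_le _ _).1 (lp_sum_le_cvg0 p0 xL) e e0.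
have y_l2 := lp_sum_le_truncate M x (ltr0n R 2).
have y_bdd := lp_sum_le_bounded (ler1n R 2) y_l2.
have [N hN] := cesaro_avg_unif_cauchy_l2 hT y_l2 e0.
exists (cesaro_avg T (truncate M x)), N; split => // n i _.
rewrite -(cesaro_avgB hT.1) //; apply: (cesaro_avg_linf_le hT) => k.
rewrite /truncate; case: ltnP => [_|Mk]; first by rewrite subrr normr0 ltW.
by rewrite subr0 -normrN -sub0r; exact: hM.
Qed.

Unset Implicit Arguments.

Theorem theorem3p2 (R : realType) (p : R) (hp : 1 <= p)
  (T : (nat -> R) -> (nat -> R)) (hT : dunford_schwartz T)
  (x : nat -> R) (hx : in_lp p x) :
  exists xhat : nat -> R, in_lp p xhat /\
    ((fun n : nat => linf_norm (fun i => cesaro_avg T x n i - xhat i)) @ \oo --> (0 : R)).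
Proof.
have p0 : 0 < p := lt_le_trans ltr01 hp.
have [L xL] := (in_lpP x hp).1 hx.
have [xhat avg_cvg] := unif_cauchy_cvg (cesaro_avg_unif_cauchy hT hp xL).
exists xhat; split; last exact: unif_cvg_linf_norm.
apply/(in_lpP xhat hp); exists L.
apply: (lp_sum_le_lim p0 (unif_cvg_pointwise avg_cvg)) => n.
exact: lp_sum_le_cesaro_avg.
Qed.
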